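(* For every $q\in(0,\frac12)$, \[ \sum_{n=2}^\infty q^{\sigma_\infty(n)}\le\frac{(2-q)q}{1-2q}. \]
   Context: $T$ is the Collatz map $T(n)=\frac{3n+1}2$ ($n$ odd), $T(n)=\frac n2$ ($n$ even); for a positive integer $n$, $\sigma_\infty(n)$ is the least $k\ge0$ with $T^k(n)=1$, and $\sigma_\infty(n)=\infty$ if no such $k$ exists. Convention: $q^\infty=0$ for $0<q<1$. *)

From mathcomp Require Import all_boot all_order all_algebra.
From mathcomp Require Import all_classical all_reals all_analysis.
Set Implicit Arguments. Unset Strict Implicit. Unset Printing Implicit Defensive.
Import Order.TTheory GRing.Theory Num.Theory.

Definition collatzT (n : nat) : nat :=
  if odd n then (3 * n + 1)./2 else n./2.

(* sigma_inf n = Some k with k the least k such that T^k(n) = 1,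
   or None (standing for infinity) if no such k exists. *)
Definition sigma_inf (n : nat) : option nat :=
  match pselect (exists k, (fun k => iter k collatzT n == 1) k) with
  | left h => Some (ex_minn h)
  | right _ => None
  end.

(* q ^ sigma, with the convention q ^ infinity = 0. *)
Definition qpow_inf {R : realType} (q : R) (s : option nat) : R :=
  match s with
  | Some k => (q ^+ k)%R
  | None => 0%R
  end.

From mathcomp Require Import all_boot all_order all_algebra.
From mathcomp Require Import all_classical all_reals all_analysis.
From mathcomp Require Import zify ring lra.
Import Order.TTheory GRing.Theory Num.Theory.
Local Open Scope ring_scope.

(* Every m has at most two preimages under T, namely 2m and (2m-1)/3, so at
   most 2^(k-1) integers n >= 2 have stopping time k, and the series is at most
   sum_k 2^(k-1) q^k = q / (1 - 2q), which is even smaller than the claimed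
   bound.  To stay with finite sums the counting is run as an induction on a
   truncation level K: for n >= 2 the truncated weight of n is q times the
   weight of T n at level K - 1, and splitting the n according to the parity
   branch of T gives S_(K+1) <= q (1 + 2 S_K) for the truncated sums. *)

Lemma collatzT_double i : collatzT i.*2 = i.
Proof. by rewrite /collatzT odd_double half_double. Qed.

Lemma collatzT_doubleS i : collatzT i.*2.+1 = (3 * i + 2)%N.
Proof.
rewrite /collatzT oddS odd_double.
have -> : (3 * i.*2.+1 + 1 = (3 * i + 2).*2)%N by rewrite -!mul2n; lia.
by rewrite half_double.
Qed.

Lemma sigma_inf1 : sigma_inf 1 = Some 0%N.
Proof.
rewrite /sigma_inf; case: pselect => [h|[]]; last by exists 0%N.
by congr Some; case: ex_minnP => m _ /(_ 0%N isT); rewrite leqn0 => /eqP.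
Qed.

Lemma sigma_inf_collatzT n :
  n != 1%N -> sigma_inf n = omap succn (sigma_inf (collatzT n)).
Proof.
move=> n1; rewrite /sigma_inf.
case: pselect => [hn|hn]; case: pselect => [hT|hT] //=.
- congr Some; case: ex_minnP => -[|m]; first by rewrite /= (negbTE n1).
  rewrite iterSr => Hm minm; case: ex_minnP => m' Hm' minm'.
  by apply/eqP; rewrite eqSS eqn_leq minm' //= -ltnS minm // iterSr.
- by case: hT; case: hn => -[|j]; rewrite ?iterSr /= ?(negbTE n1) // => Hj; exists j.
- by case: hn; case: hT => j Hj; exists j.+1; rewrite iterSr.
Qed.

Section NatSums.
Context {R : numDomainType} {h : nat -> R} (h_ge0 : forall i, 0 <= h i).

Lemma ler_sum_nat_widen [m m' n n' : nat] : (m' <= m)%N -> (n <= n')%N ->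
  \sum_(m <= i < n) h i <= \sum_(m' <= i < n') h i.
Proof.
move=> m'm nn'; have [nm|mn] := leqP n m.
  by rewrite big_geq // sumr_ge0.
rewrite (big_cat_nat m'm (leq_trans (ltnW mn) nn')) /=.
rewrite (big_cat_nat (ltnW mn) nn') /= ler_wpDl ?sumr_ge0 //.
by rewrite lerDl sumr_ge0.
Qed.

Lemma ler_sum_mul_index k N : (0 < k)%N ->
  \sum_(0 <= i < N) h (k * i)%N <= \sum_(0 <= j < k * N) h j.
Proof.
move=> k_gt0; elim: N => [|N IH]; first by rewrite muln0 !big_geq.
rewrite big_nat_recr //= mulnS addnC (big_cat_nat (leq0n _) (leq_addr k _)) /=.
rewrite lerD // big_ltn; last lia.
by rewrite lerDl sumr_ge0.
Qed.

End NatSums.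

Lemma sum_collatzT_double (R : nmodType) (g : nat -> R) N :
  \sum_(0 <= n < N.*2) g (collatzT n)
    = \sum_(0 <= i < N) g i + \sum_(0 <= i < N) g (3 * i + 2)%N.
Proof.
elim: N => [|N IH]; first by rewrite !big_geq // addr0.
rewrite doubleS !big_nat_recr //= IH collatzT_double collatzT_doubleS.
by rewrite [RHS]addrACA addrA.
Qed.

Section CollatzWeight.
Context {R : realFieldType} (q : R).

(* [collatz_weight K n] is q ^ sigma(n) if sigma(n) < K, and 0 otherwise. *)
Fixpoint collatz_weight (K n : nat) : R :=
  if K is K'.+1 then
    if n == 1%N then 1 else q * collatz_weight K' (collatzT n)
  else 0.

Lemma collatz_weight_sigma K n k :
  sigma_inf n = Some k -> (k < K)%N -> collatz_weight K n = q ^+ k.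
Proof.
elim: K n k => [//|K IH] n k /=; case: eqVneq => [->|n1].
  by rewrite sigma_inf1 => -[<-].
rewrite sigma_inf_collatzT //; case E: sigma_inf => [j|] //= [<-] jK.
by rewrite (IH _ j) // exprS.
Qed.

Lemma collatz_weight0 K : collatz_weight K 0 = 0.
Proof. by elim: K => //= K IHK; rewrite -[collatzT 0]/0%N IHK mulr0. Qed.

Hypotheses (q_ge0 : 0 <= q) (q2_lt1 : 2 * q < 1).

Let q_le1 : q <= 1. Proof. by move: q_ge0 q2_lt1; lra. Qed.
Let one_sub_2q_gt0 : 0 < 1 - 2 * q. Proof. by rewrite subr_gt0. Qed.

Lemma collatz_weight_ge0 K n : 0 <= collatz_weight K n.
Proof.
by elim: K n => [//|K IH] n /=; case: eqP => // _; rewrite mulr_ge0.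
Qed.

Lemma collatz_weight_le1 K n : collatz_weight K n <= 1.
Proof.
elim: K n => [//|K IH] n /=; case: eqP => // _.
by rewrite mulr_ile1 ?collatz_weight_ge0 ?IH.
Qed.

Lemma sum_collatz_weight_le K N :
  \sum_(2 <= n < N) collatz_weight K n <= q / (1 - 2 * q).
Proof.
have B_ge0 : 0 <= q / (1 - 2 * q) by rewrite divr_ge0 // ltW.
elim: K N => [|K IH] N; first by rewrite big1.
have w_ge0 := collatz_weight_ge0 K.
have -> : \sum_(2 <= n < N) collatz_weight K.+1 n
          = q * \sum_(2 <= n < N) collatz_weight K (collatzT n).
  rewrite mulr_sumr; apply: eq_big_nat => n /andP[n2 _] /=.
  by rewrite ifN //; apply/eqP => n1; rewrite n1 in n2.
have -> : q / (1 - 2 * q) = q * (1 + 2 * (q / (1 - 2 * q))).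
  by field; rewrite lt0r_neq0.
rewrite ler_wpM2l //.
have even_preimages : \sum_(0 <= i < N) collatz_weight K i <= 1 + q / (1 - 2 * q).
  apply: le_trans (ler_sum_nat_widen w_ge0 (leq0n 0) (leqW (leqnSn N))) _.
  by rewrite big_ltn // big_ltn // collatz_weight0 add0r lerD ?collatz_weight_le1.
have odd_preimages :
    \sum_(0 <= i < N) collatz_weight K (3 * i + 2)%N <= q / (1 - 2 * q).
  pose w2 j := collatz_weight K (j + 2).
  apply: le_trans (@ler_sum_mul_index _ w2 (fun j => w_ge0 _) 3 N isT) _.
  rewrite [leLHS](_ : _ = \sum_(2 <= m < 3 * N + 2) collatz_weight K m) ?IH //.
  by rewrite (big_addn 0 _ 2) addnK.
apply: le_trans (ler_sum_nat_widen (fun n => w_ge0 _) (leq0n 2) (leq_addl N N)) _.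
by rewrite addnn sum_collatzT_double mulr_natl mulr2n addrA lerD.
Qed.

End CollatzWeight.

Lemma sum_qpow_sigma_le {R : realType} {q : R} N : 0 <= q -> 2 * q < 1 ->
  \sum_(2 <= n < N) qpow_inf q (sigma_inf n) <= q / (1 - 2 * q).
Proof.
move=> q_ge0 q2_lt1.
pose K := (\max_(n < N) odflt 0%N (sigma_inf n)).+1.
apply: le_trans (sum_collatz_weight_le q q_ge0 q2_lt1 K N).
apply: ler_sum_nat => n /andP[_ nN].
case E: (sigma_inf n) => [k|]; last exact: collatz_weight_ge0 q q_ge0 K n.
rewrite (collatz_weight_sigma q K n k E) ?lexx // ltnS.
have := leq_bigmax (F := fun i : 'I_N => odflt 0%N (sigma_inf i)) (Ordinal nN).
by rewrite /= E.
Qed.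

Theorem mainTheorem13 (R : realType) (q : R) :
  0 < q -> q < 1 / 2 ->
  (\sum_(2 <= n <oo) (qpow_inf q (sigma_inf n))%:E
     <= ((2 - q) * q / (1 - 2 * q))%:E)%E.
Proof.
move=> q_gt0 q_lt_half; have q2_lt1 : 2 * q < 1 by move: q_lt_half; lra.
apply: lime_le.
  apply: is_cvg_nneseries => n _ _; rewrite lee_fin.
  by case: sigma_inf => //= k; rewrite exprn_ge0 // ltW.
apply: nearW => N; rewrite sumEFin lee_fin.
apply: le_trans (sum_qpow_sigma_le N (ltW q_gt0) q2_lt1) _.
by rewrite ler_wpM2r ?invr_ge0 ?ler_peMl //; lra.
Qed.
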